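(* Let $\mathcal{C}$ be a binary linear block code of length $n$, BPSK-modulated and transmitted over an AWGN channel as described in the context, with the all-zero codeword transmitted, and let $E$ be the maximum-likelihood decoding error event. Let $\{\mathcal{R}(r), r\in\mathcal{I}\subseteq\mathbb{R}\}$ be a family of regions satisfying assumptions A1–A3 of the context, with induced random variable $R$ having pdf $g(r)$ (extended by $g(r)\equiv 0$ for $r\notin\mathcal{I}$), and let $f_u(r)$ be an upper bound on ${\rm Pr}\{E\mid \underline y\in\partial\mathcal{R}(r)\}$ that is measurable with respect to $g$. Then for any $r^*\in\mathbb{R}$, $$ {\rm Pr}\{E\} \le \int_{-\infty}^{r^*} f_u(r)g(r)\,{\rm d}r + \int_{r^*}^{+\infty} g(r)\,{\rm d}r. $$
   Context: System model: $\mathcal{C}[n,k,d_{\min}]$ is a binary linear code. A codeword $\underline c=(c_0,\dots,c_{n-1})$ is mapped to $\underline s$ with $s_t=1-2c_t$, and $\underline y=\underline s+\underline z$ is received, where $\underline z$ has i.i.d. zero-mean Gaussian components of variance $\sigma^2$. ML decoding chooses the signal vector nearest to $\underline y$ in Euclidean distance. The bipolar image $\underline s^{(0)}$ of the all-zero codeword is transmitted; $E$ denotes the decoding error event. Assumptions: (A1) The regions are nested and their boundaries partition $\mathbb{R}^n$: $\mathcal{R}(r_1)\subset\mathcal{R}(r_2)$ if $r_1<r_2$; $\partial\mathcal{R}(r_1)\cap\partial\mathcal{R}(r_2)=\emptyset$ if $r_1\ne r_2$; and $\mathbb{R}^n=\bigcup_{r\in\mathcal{I}}\partial\mathcal{R}(r)$,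 where $\partial\mathcal{R}(r)$ is the boundary of $\mathcal{R}(r)$. (A2) The map $R:\underline y\mapsto r$ whenever $\underline y\in\partial\mathcal{R}(r)$ induces a random variable $R$ with a probability density function $g(r)$. (A3) ${\rm Pr}\{E\mid\underline y\in\partial\mathcal{R}(r)\}\le f_u(r)$ for a computable function $f_u$. *)

From HB Require Import structures.
From mathcomp Require Import all_boot all_order all_algebra.
From mathcomp Require Import all_classical all_reals all_analysis.
Set Implicit Arguments. Unset Strict Implicit. Unset Printing Implicit Defensive.
Import Order.TTheory GRing.Theory Num.Theory.
Import numFieldNormedType.Exports.
Local Open Scope classical_set_scope.
Local Open Scope ring_scope.

Definition bdry {R : realType} {n : nat} (A : set 'rV[R]_n) : set 'rV[R]_n :=
  closure A `\` interior A.

Definition bpsk {R : realType} {n : nat} (c : 'rV['F_2]_n) : 'rV[R]_n :=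
  \row_t (1 - 2 * ((nat_of_ord (c ord0 t))%:R : R)).

Definition sqdist {R : realType} {n : nat} (x y : 'rV[R]_n) : R :=
  \sum_(t < n) (x ord0 t - y ord0 t) ^+ 2.

(* ML decoding error event when the all-zero codeword is sent and y is received:
   some nonzero codeword has a bipolar image at least as close to y as s^(0)
   (ties counted as errors). *)
Definition ml_error {R : realType} {n : nat} (C : {vspace 'rV['F_2]_n})
    (y : 'rV[R]_n) : Prop :=
  exists c, c \in C /\ c != 0 /\ sqdist y (bpsk c) <= sqdist y (bpsk 0).

Definition mutually_independent {d} {T : measurableType d} {R : realType}
    (P : probability T R) {n : nat} (X : 'I_n -> T -> R) : Prop :=
  forall B : 'I_n -> set R, (forall i, measurable (B i)) ->
    P (\bigcap_(i in [set: 'I_n]) (X i @^-1` B i)) =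
    (\prod_(i < n) P (X i @^-1` B i))%E.

From HB Require Import structures.
From mathcomp Require Import all_boot all_order all_algebra.
From mathcomp Require Import all_classical all_reals all_analysis.
Import Order.TTheory GRing.Theory Num.Theory.
Import numFieldNormedType.Exports.
Local Open Scope classical_set_scope.
Local Open Scope ring_scope.

Set Implicit Arguments.
Unset Strict Implicit.

(* Split the error event according to whether R <= r* or R > r*.  On the first
   part, Pr{E, R in B} = int_B h g with h <= f_u wherever g > 0; the second part
   is bounded by Pr{R > r*} = int_(r*,oo) g.  No property of the Gaussian channel
   is needed beyond the measurability of the ML error event. *)

Section MeasurableMLError.
Variables (d : measure_display) (T : measurableType d) (R : realType) (n : nat).
Variable y : T -> 'rV[R]_n.
Hypothesis my : forall t, measurable_fun setT (fun w => y w ord0 t).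

Lemma measurable_sqdist (c : 'rV[R]_n) :
  measurable_fun setT (fun w => sqdist (y w) c).
Proof.
apply: measurable_sum => t; apply: measurable_realfun.measurable_funX.
by apply: measurable_realfun.measurable_funB => //; exact: measurable_cst.
Qed.

Lemma measurable_ml_error (C : {vspace 'rV['F_2]_n}) :
  measurable [set w | ml_error C (y w)].
Proof.
pose closer (c : 'rV['F_2]_n) :=
  [set w | sqdist (y w) (bpsk c) <= sqdist (y w) (bpsk 0)].
have -> : [set w | ml_error C (y w)] =
    \bigcup_(c in [set c | (c \in C) && (c != 0)]) closer c.
  apply/seteqP; split => w /=.
    by move=> [c [cC [c0 le]]]; exists c; rewrite //= cC c0.
  by move=> [c /andP[cC c0] le]; exists c.
apply: fin_bigcup_measurable; first exact: finite_finset.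
move=> c _; rewrite -[closer c]setTI.
exact: measurable_fun_le measurableT (measurable_sqdist _) (measurable_sqdist _).
Qed.

End MeasurableMLError.

Lemma measure_le_threshold_split d (T : measurableType d) (R : realType)
    (mu : {measure set T -> \bar R}) (E : set T) (S : T -> R) (rs : R) :
  measurable E -> measurable_fun setT S ->
  (mu E <= mu (E `&` S @^-1` `]-oo, rs]) + mu (S @^-1` `]rs, +oo[))%E.
Proof.
move=> mE mS.
have mpre (D : set R) : measurable D -> measurable (S @^-1` D).
  by move=> mD; rewrite -[_ @^-1` _]setTI; exact: mS.
have mA := mpre _ (measurable_itv `]-oo, rs]).
have mB := mpre _ (measurable_itv `]rs, +oo[).
have splitE : E = (E `&` S @^-1` `]-oo, rs]) `|` (E `&` S @^-1` `]rs, +oo[).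
  rewrite -setIUr; apply/esym/setIidPl => w _ /=.
  by rewrite !in_itv /= andbT; case: (leP (S w) rs); [left|right].
rewrite [X in mu X]splitE.
apply: le_trans (measureU2 _ (measurableI _ _ mE mA) (measurableI _ _ mE mB)) _.
apply: leeD => //; apply: le_measure; rewrite ?inE //; exact: measurableI.
Qed.

Lemma le_integral_weighted (R : realType) (D : set R) (g h f : R -> R) :
  measurable D -> measurable_fun setT g -> measurable_fun setT h ->
  measurable_fun setT f ->
  (forall r, 0 <= g r) -> (forall r, 0 <= h r) ->
  (forall r, g r != 0 -> h r <= f r) ->
  (\int[lebesgue_measure]_(r in D) (h r * g r)%:E <=
   \int[lebesgue_measure]_(r in D) (f r * g r)%:E)%E.
Proof.
move=> mD mg mh mf g0 h0 hf.
have mprod (k : R -> R) : measurable_fun setT k ->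
    measurable_fun D (fun r => k r * g r).
  move=> mk; apply: measurable_realfun.measurable_funM;
    exact: measurable_funS measurableT (@subsetT _ D) _.
apply: ge0_le_integral => //.
- by move=> r _; rewrite lee_fin mulr_ge0.
- by apply/measurable_realfun.measurable_EFinP; exact: mprod.
- by apply/measurable_realfun.measurable_EFinP; exact: mprod.
- move=> r _; rewrite lee_fin.
  have [->|gr0] := eqVneq (g r) 0; first by rewrite !mulr0.
  by rewrite ler_wpM2r // hf.
Qed.

Theorem proposition1
  (R : realType) (n : nat) (C : {vspace 'rV['F_2]_n})
  (d : measure_display) (T : measurableType d) (P : probability T R)
  (sigma : R) (z : 'I_n -> T -> R)
  (* index set I, regions R(r), boundary map R, pdf g, bound f_u, version h *)
  (I : set R) (Reg : R -> set 'rV[R]_n) (Rmap : 'rV[R]_n -> R)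
  (g fu h : R -> R) (rs : R) :
  (* channel: i.i.d. zero-mean Gaussian noise of variance sigma^2 *)
  0 < sigma ->
  (forall t, measurable_fun setT (z t)) ->
  (forall t B, measurable B -> P (z t @^-1` B) = normal_prob 0 sigma B) ->
  mutually_independent P z ->
  let y : T -> 'rV[R]_n := fun w => \row_t ((bpsk 0 : 'rV[R]_n) ord0 t + z t w) in
  let E : set T := [set w | ml_error C (y w)] in
  (* (A1) nested regions whose boundaries partition R^n *)
  (forall r1 r2, I r1 -> I r2 -> r1 < r2 -> Reg r1 `<=` Reg r2) ->
  (forall r1 r2, I r1 -> I r2 -> r1 != r2 -> bdry (Reg r1) `&` bdry (Reg r2) = set0) ->
  \bigcup_(r in I) bdry (Reg r) = setT ->
  (* the map R : y |-> r whenever y lies on the boundary of R(r) *)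
  (forall v, I (Rmap v) /\ bdry (Reg (Rmap v)) v) ->
  (* (A2) R = Rmap(y) is a random variable with pdf g (g = 0 outside I) *)
  measurable_fun setT (Rmap \o y) ->
  measurable_fun setT g ->
  (forall r, 0 <= g r) ->
  (forall r, ~ I r -> g r = 0) ->
  (forall B, measurable B ->
     P ((Rmap \o y) @^-1` B) = (\int[lebesgue_measure]_(r in B) (g r)%:E)%E) ->
  (* (A3) h is (a version of) Pr{E | y in bdry R(r)}, bounded above by f_u *)
  measurable_fun setT h ->
  (forall r, 0 <= h r <= 1) ->
  (forall B, measurable B ->
     P (E `&` (Rmap \o y) @^-1` B) =
       (\int[lebesgue_measure]_(r in B) (h r * g r)%:E)%E) ->
  (forall r, I r -> h r <= fu r) ->
  measurable_fun setT fu ->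
  (P E <=
     \int[lebesgue_measure]_(r in `]-oo, rs]) (fu r * g r)%:E
     + \int[lebesgue_measure]_(r in `]rs, +oo[) (g r)%:E)%E.
Proof.
move=> _ mz _ _ y E _ _ _ _ mS mg g0 gI PS mh h01 PES hfu mfu.
have my t : measurable_fun setT (fun w => y w ord0 t).
  rewrite /y; under eq_fun do rewrite mxE.
  by apply: measurable_realfun.measurable_funD => //; exact: measurable_cst.
have mE : measurable E := measurable_ml_error my C.
apply: le_trans (measure_le_threshold_split _ rs mE mS) _.
have mA := measurable_itv `]-oo, rs].
apply: leeD; last by rewrite -PS //; exact: measurable_itv.
apply: le_trans (le_integral_weighted mA mg mh mfu g0 _ _); first by rewrite -PES.
- by move=> r; case/andP: (h01 r).
- by move=> r /eqP gr0; apply: hfu; exact: contra_notP (gI r) gr0.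
Qed.
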